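(* Let $\mathcal{X}$ be a Hilbert $C^*$-module over a $C^*$-algebra $\mathcal{A}$, let $T\in\mathcal{L}(\mathcal{X})$ be self-adjoint, and let $A,B\in\mathcal{Z}(\mathcal{A})$ be such that the operator $C_{A,B}(T)=(T-R_A)^*(R_B-T)$ is accretive. Then \[ \langle T^2h,h\rangle-\langle Th,h\rangle^2\leq \tfrac14|B-A|^2-\langle {\rm Re}\,C_{A,B}(T)h,h\rangle\leq \tfrac14|B-A|^2 \] for every lifted projection $h\in\mathcal{X}$.
   Context: The $\mathcal{A}$-valued inner product $\langle\cdot,\cdot\rangle$ is $\mathcal{A}$-linear in the second variable ($\langle x,ya\rangle=\langle x,y\rangle a$). $\mathcal{L}(\mathcal{X})$ is the $C^*$-algebra of adjointable maps on $\mathcal{X}$. $\mathcal{Z}(\mathcal{A})$ is the center of $\mathcal{A}$; for $A\in\mathcal{Z}(\mathcal{A})$, $R_A\in\mathcal{L}(\mathcal{X})$ is defined by $R_Ax=xA$. For $a\in\mathcal{A}$, $|a|^2=a^*a$. An operator $S$ is accretive if ${\rm Re}\,S=(S+S^* )/2\geq 0$. An element $h\in\mathcal{X}$ is a lifted projection if $\langle h,h\rangle^{1/2}$ is a (nonzero) projection in $\mathcal{A}$. *)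

From HB Require Import structures.
From mathcomp Require Import all_boot all_order all_algebra.
From mathcomp Require Import complex reals.
From Stdlib Require Import ClassicalEpsilon.
Set Implicit Arguments. Unset Strict Implicit. Unset Printing Implicit Defensive.
Import Order.TTheory GRing.Theory Num.Theory.
Local Open Scope ring_scope.

Record cstar_alg (R : realType) (A : lmodType R[i]) := CStarAlg {
  cmul : A -> A -> A;
  cstar : A -> A;
  cnorm : A -> R;
  cmulA : forall a b c, cmul a (cmul b c) = cmul (cmul a b) c;
  cmulDl : forall a b c, cmul (a + b) c = cmul a c + cmul b c;
  cmulDr : forall a b c, cmul a (b + c) = cmul a b + cmul a c;
  cmulZl : forall (l : R[i]) a b, cmul (l *: a) b = l *: cmul a b;
  cmulZr : forall (l : R[i]) a b, cmul a (l *: b) = l *: cmul a b;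
  cstarD : forall a b, cstar (a + b) = cstar a + cstar b;
  cstarZ : forall (l : R[i]) a, cstar (l *: a) = conjc l *: cstar a;
  cstarK : forall a, cstar (cstar a) = a;
  cstarM : forall a b, cstar (cmul a b) = cmul (cstar b) (cstar a);
  cnorm_eq0 : forall a, cnorm a = 0 -> a = 0;
  cnormD : forall a b, cnorm (a + b) <= cnorm a + cnorm b;
  cnormZ : forall (l : R[i]) a, cnorm (l *: a) = ComplexField.Normc.normc l * cnorm a;
  cnormM : forall a b, cnorm (cmul a b) <= cnorm a * cnorm b;
  cnorm_cstar : forall a, cnorm (cmul (cstar a) a) = cnorm a ^+ 2;
  ccomplete : forall u : nat -> A,
    (forall e : R, 0 < e -> exists N, forall n m, (N <= n)%N -> (N <= m)%N ->
        cnorm (u n - u m) < e) ->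
    exists l, forall e : R, 0 < e -> exists N, forall n, (N <= n)%N ->
        cnorm (u n - l) < e
}.


(* positive elements: a = b^* b  (the standard characterization of A_+) *)
Definition cpos (R : realType) (A : lmodType R[i]) (cA : cstar_alg A) (a : A) :=
  exists b, a = cmul cA (cstar cA b) b.

Definition cle (R : realType) (A : lmodType R[i]) (cA : cstar_alg A) (a b : A) :=
  cpos cA (b - a).

Definition csq_abs (R : realType) (A : lmodType R[i]) (cA : cstar_alg A) (a : A) :=
  cmul cA (cstar cA a) a.

Definition central (R : realType) (A : lmodType R[i]) (cA : cstar_alg A) (a : A) :=
  forall b, cmul cA a b = cmul cA b a.

Definition cprojection (R : realType) (A : lmodType R[i]) (cA : cstar_alg A) (p : A) :=
  cmul cA p p = p /\ cstar cA p = p.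

Definition is_csqrt (R : realType) (A : lmodType R[i]) (cA : cstar_alg A) (q a : A) :=
  cpos cA q /\ cmul cA q q = a.

Record hmodule (R : realType) (A : lmodType R[i]) (cA : cstar_alg A)
    (X : lmodType R[i]) := HModule {
  ract : X -> A -> X;
  ip : X -> X -> A;
  ractDl : forall x y a, ract (x + y) a = ract x a + ract y a;
  ractDr : forall x a b, ract x (a + b) = ract x a + ract x b;
  ractM : forall x a b, ract (ract x a) b = ract x (cmul cA a b);
  ractZl : forall (l : R[i]) x a, ract (l *: x) a = l *: ract x a;
  ractZr : forall (l : R[i]) x a, ract x (l *: a) = l *: ract x a;
  ipD : forall x y z, ip x (y + z) = ip x y + ip x z;
  ipZ : forall (l : R[i]) x y, ip x (l *: y) = l *: ip x y;
  ipM : forall x y a, ip x (ract y a) = cmul cA (ip x y) a;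
  ip_sym : forall x y, ip y x = cstar cA (ip x y);
  ip_pos : forall x, cpos cA (ip x x);
  ip_eq0 : forall x, ip x x = 0 -> x = 0;
  hcomplete : forall u : nat -> X,
    (forall e : R, 0 < e -> exists N, forall n m, (N <= n)%N -> (N <= m)%N ->
        Num.sqrt (cnorm cA (ip (u n - u m) (u n - u m))) < e) ->
    exists l, forall e : R, 0 < e -> exists N, forall n, (N <= n)%N ->
        Num.sqrt (cnorm cA (ip (u n - l) (u n - l))) < e
}.


Definition is_adjoint (R : realType) (A : lmodType R[i]) (cA : cstar_alg A)
    (X : lmodType R[i]) (M : hmodule cA X) (S S' : X -> X) :=
  forall x y, ip M (S x) y = ip M x (S' y).

Definition adjointable (R : realType) (A : lmodType R[i]) (cA : cstar_alg A)
    (X : lmodType R[i]) (M : hmodule cA X) (S : X -> X) :=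
  exists S', is_adjoint M S S'.

(* the adjoint S^* (unique by definiteness of the inner product) *)
Definition adj (R : realType) (A : lmodType R[i]) (cA : cstar_alg A)
    (X : lmodType R[i]) (M : hmodule cA X) (S : X -> X) : X -> X :=
  epsilon (inhabits (fun x : X => x)) (fun S' => is_adjoint M S S').

Definition Rop (R : realType) (A : lmodType R[i]) (cA : cstar_alg A)
    (X : lmodType R[i]) (M : hmodule cA X) (a : A) : X -> X :=
  fun x => ract M x a.

Definition op_pos (R : realType) (A : lmodType R[i]) (cA : cstar_alg A)
    (X : lmodType R[i]) (M : hmodule cA X) (S : X -> X) :=
  exists Q, adjointable M Q /\ forall x, S x = adj M Q (Q x).

Definition ReOp (R : realType) (A : lmodType R[i]) (cA : cstar_alg A)
    (X : lmodType R[i]) (M : hmodule cA X) (S : X -> X) : X -> X :=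
  fun x => (2%:R : R[i])^-1 *: (S x + adj M S x).

Definition accretive (R : realType) (A : lmodType R[i]) (cA : cstar_alg A)
    (X : lmodType R[i]) (M : hmodule cA X) (S : X -> X) :=
  op_pos M (ReOp M S).

Definition CAB (R : realType) (A : lmodType R[i]) (cA : cstar_alg A)
    (X : lmodType R[i]) (M : hmodule cA X) (T : X -> X) (a b : A) : X -> X :=
  fun x => adj M (fun y => T y - Rop M a y) (Rop M b x - T x).

Definition lifted_projection (R : realType) (A : lmodType R[i]) (cA : cstar_alg A)
    (X : lmodType R[i]) (M : hmodule cA X) (h : X) :=
  exists p, is_csqrt cA p (ip M h h) /\ cprojection cA p /\ p != 0.

(* Write p = <h,h>, t = <Th,h>, m = (a+b)/2 and e = (b-a)/2, so that a = m - e,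
   b = m + e, p is a projection with h p = h, and t = t^* = t p.  The
   parallelogram law gives <Re C h, h> = <h e, h e> - <w, w> with w = Th - h m,
   and expanding both inner products yields
     |e|^2 - <Re C h, h> - (<T^2 h, h> - t^2) = |e - e p|^2 + |t - p m|^2.
   Positivity here means being of the form x^* x, so the sum of two squares is
   not obviously positive; but (t - p m)^* (e - e p) = 0, so the sum is the
   square |t - p m + e - e p|^2.  The second inequality is
   <Re C h, h> = <Q h, Q h> for Re C = Q^* Q. *)

From HB Require Import structures.
From mathcomp Require Import all_boot all_order all_algebra.
From mathcomp Require Import complex reals.
From Stdlib Require Import ClassicalEpsilon.
Import Order.TTheory GRing.Theory Num.Theory.
Local Open Scope ring_scope.
Set Implicit Arguments. Unset Strict Implicit.

Section CStarAlgebra.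
Variables (R : realType) (A : lmodType R[i]) (cA : cstar_alg A).
Local Notation "x ** y" := (cmul cA x y) (at level 40, left associativity).
Local Notation "x ^*" := (cstar cA x) : ring_scope.

Lemma cmul0l b : 0 ** b = 0.
Proof. by apply: (@addrI _ (0 ** b)); rewrite -cmulDl !addr0. Qed.

Lemma cmul0r b : b ** 0 = 0.
Proof. by apply: (@addrI _ (b ** 0)); rewrite -cmulDr !addr0. Qed.

Lemma cmulNl a b : (- a) ** b = - (a ** b).
Proof. by apply/eqP; rewrite -addr_eq0 -cmulDl addNr cmul0l. Qed.

Lemma cmulNr a b : a ** (- b) = - (a ** b).
Proof. by apply/eqP; rewrite -addr_eq0 -cmulDr addNr cmul0r. Qed.

Lemma cmulBl a b c : (a - b) ** c = a ** c - b ** c.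
Proof. by rewrite cmulDl cmulNl. Qed.

Lemma cmulBr a b c : c ** (a - b) = c ** a - c ** b.
Proof. by rewrite cmulDr cmulNr. Qed.

Lemma cstar0 : 0 ^* = 0.
Proof. by apply: (@addrI _ (0 ^*)); rewrite -cstarD !addr0. Qed.

Lemma cstarN a : (- a) ^* = - a ^*.
Proof. by apply/eqP; rewrite -addr_eq0 -cstarD addNr cstar0. Qed.

Lemma cstarB a b : (a - b) ^* = a ^* - b ^*.
Proof. by rewrite cstarD cstarN. Qed.

Lemma centralC a : central cA a -> central cA a ^*.
Proof. by move=> ca x; rewrite -[x](cstarK cA) -cstarM -ca cstarM !cstarK. Qed.

Lemma centralD a b : central cA a -> central cA b -> central cA (a + b).
Proof. by move=> ca cb x; rewrite cmulDl cmulDr ca cb. Qed.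

Lemma centralB a b : central cA a -> central cA b -> central cA (a - b).
Proof. by move=> ca cb x; rewrite cmulBl cmulBr ca cb. Qed.

Lemma centralZ l a : central cA a -> central cA (l *: a).
Proof. by move=> ca x; rewrite cmulZl cmulZr ca. Qed.

Lemma csq_abs_pos a : cpos cA (csq_abs cA a).
Proof. by exists a. Qed.

Lemma csq_absZ l a : csq_abs cA (l *: a) = (conjc l * l) *: csq_abs cA a.
Proof. by rewrite /csq_abs cstarZ cmulZl cmulZr scalerA. Qed.

Lemma csq_absD_orth a b : a ^* ** b = 0 ->
  csq_abs cA (a + b) = csq_abs cA a + csq_abs cA b.
Proof.
move=> ab0; have ba0 : b ^* ** a = 0 by rewrite -[a](cstarK cA) -cstarM ab0 cstar0.
by rewrite /csq_abs cstarD cmulDl !cmulDr ab0 ba0 addr0 add0r.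
Qed.

Section Projection.
Variables p e t m : A.
Hypotheses (pp : p ** p = p) (ps : p ^* = p) (ce : central cA e).
Hypotheses (ts : t ^* = t) (tp : t ** p = t).

Lemma cmul_proj_idl : p ** t = t.
Proof. by rewrite -[t in LHS]ts -ps -cstarM tp ts. Qed.

Lemma csq_abs_sub_mulp : csq_abs cA (e - e ** p) = csq_abs cA e - e ^* ** (p ** e).
Proof.
have ce' := centralC ce.
rewrite /csq_abs cstarB cstarM ps !(cmulBl, cmulBr) -(ce' p) -!cmulA (ce p).
by rewrite (cmulA _ p p) pp subrr subr0.
Qed.

Lemma csq_abs_sub_pmul :
  csq_abs cA (t - p ** m) = t ** t - t ** m - m ^* ** t + m ^* ** (p ** m).
Proof.
rewrite /csq_abs cstarB cstarM ps ts !(cmulBl, cmulBr) (cmulA _ t) tp.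
by rewrite -!cmulA cmul_proj_idl (cmulA _ p p) pp opprB addrA addrAC.
Qed.

Lemma sub_pmul_orth : (t - p ** m) ^* ** (e - e ** p) = 0.
Proof.
rewrite cstarB cstarM ps ts !(cmulBl, cmulBr) (ce p) (cmulA _ t) tp.
by rewrite -!cmulA (cmulA _ p p) pp !subrr.
Qed.

End Projection.
End CStarAlgebra.

Section HilbertModule.
Variables (R : realType) (A : lmodType R[i]) (cA : cstar_alg A).
Variables (X : lmodType R[i]) (M : hmodule cA X).
Local Notation "x ** y" := (cmul cA x y) (at level 40, left associativity).
Local Notation "x ^*" := (cstar cA x) : ring_scope.
Local Notation ip := (ip M).
Local Notation ract := (ract M).

Lemma ip0r x : ip x 0 = 0.
Proof. by apply: (@addrI _ (ip x 0)); rewrite -ipD !addr0. Qed.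

Lemma ipNr x y : ip x (- y) = - ip x y.
Proof. by apply/eqP; rewrite -addr_eq0 -ipD addNr ip0r. Qed.

Lemma ipBr x y z : ip x (y - z) = ip x y - ip x z.
Proof. by rewrite ipD ipNr. Qed.

Lemma ipDl x y z : ip (x + y) z = ip x z + ip y z.
Proof. by rewrite ip_sym ipD cstarD -!ip_sym. Qed.

Lemma ipNl x y : ip (- x) y = - ip x y.
Proof. by rewrite ip_sym ipNr cstarN -ip_sym. Qed.

Lemma ipBl x y z : ip (x - y) z = ip x z - ip y z.
Proof. by rewrite ipDl ipNl. Qed.

Lemma ipZl l x y : ip (l *: x) y = conjc l *: ip x y.
Proof. by rewrite ip_sym ipZ cstarZ -ip_sym. Qed.

Lemma ip_ractl x a y : ip (ract x a) y = a ^* ** ip x y.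
Proof. by rewrite ip_sym ipM cstarM -ip_sym. Qed.

Lemma ract0r x : ract x 0 = 0.
Proof. by apply: (@addrI _ (ract x 0)); rewrite -ractDr !addr0. Qed.

Lemma ractNr x a : ract x (- a) = - ract x a.
Proof. by apply/eqP; rewrite -addr_eq0 -ractDr addNr ract0r. Qed.

Lemma ractBr x a b : ract x (a - b) = ract x a - ract x b.
Proof. by rewrite ractDr ractNr. Qed.

Lemma ip_parallelogram v w :
  ip (v - w) (w + v) + ip (w + v) (v - w) = (ip v v - ip w w) *+ 2.
Proof.
rewrite !(ipBl, ipDl, ipBr, ipD) mulr2n !opprD ?opprK !addrA.
rewrite [LHS](@GRing.add A).[ACl ((1*8)*(4*5)*2*3*6*7)].
by rewrite subrr addNr !add0r.
Qed.

Lemma adjP S : adjointable M S -> is_adjoint M S (adj M S).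
Proof. by move=> hS; apply: epsilon_spec. Qed.

Lemma is_adjoint_sym S S' : is_adjoint M S S' -> is_adjoint M S' S.
Proof. by move=> hS x y; rewrite ip_sym -hS -ip_sym. Qed.

Lemma is_adjoint_sub S S' U U' : is_adjoint M S S' -> is_adjoint M U U' ->
  is_adjoint M (fun x => S x - U x) (fun x => S' x - U' x).
Proof. by move=> hS hU x y; rewrite ipBl ipBr hS hU. Qed.

Lemma is_adjoint_comp S S' U U' : is_adjoint M S S' -> is_adjoint M U U' ->
  is_adjoint M (fun x => S (U x)) (fun x => U' (S' x)).
Proof. by move=> hS hU x y; rewrite hS hU. Qed.

Lemma is_adjoint_Rop a : central cA a -> is_adjoint M (Rop M a) (Rop M a ^*).
Proof. by move=> ca x y; rewrite /Rop ip_ractl ipM centralC. Qed.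

Lemma ip_ReOpl S x : adjointable M S ->
  ip (ReOp M S x) x = (2%:R : R[i])^-1 *: (ip (S x) x + ip x (S x)).
Proof.
move=> /adjP/is_adjoint_sym hS.
by rewrite /ReOp ipZl ipDl hS rmorphV ?rmorph_nat // unitfE pnatr_eq0.
Qed.

Lemma accretive_ip_pos S x : accretive M S -> cpos cA (ip (ReOp M S x) x).
Proof.
case=> Q [/adjP/is_adjoint_sym hQ ->]; rewrite hQ; exact: ip_pos.
Qed.

Lemma ip_ReOp_CAB T m e x : is_adjoint M T T -> central cA m -> central cA e ->
  ip (ReOp M (CAB M T (m - e) (m + e)) x) x
  = ip (ract x e) (ract x e) - ip (T x - ract x m) (T x - ract x m).
Proof.
move=> hT cm ce.
set U := fun y => T y - Rop M (m - e) y; set V := fun y => Rop M (m + e) y - T y.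
have hU : adjointable M U by eexists; apply/is_adjoint_sub/is_adjoint_Rop/centralB.
have hV : is_adjoint M V (fun y => Rop M (m + e) ^* y - T y).
  exact/is_adjoint_sub/hT/is_adjoint_Rop/centralD.
have hC : adjointable M (CAB M T (m - e) (m + e)).
  by eexists; apply: is_adjoint_comp hV; apply/is_adjoint_sym/adjP.
rewrite ip_ReOpl // /CAB -/U -/(V x) (is_adjoint_sym (adjP hU)) -(adjP hU).
have -> : U x = (T x - ract x m) + ract x e.
  by rewrite /U /Rop ractBr opprB addrA addrAC.
have -> : V x = ract x e - (T x - ract x m).
  by rewrite /V /Rop ractDr opprB (addrC (ract x m)) -addrA.
rewrite ip_parallelogram -[(_ - _) *+ 2]scaler_nat scalerA.
by rewrite mulVf ?pnatr_eq0 // scale1r.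
Qed.

Lemma lifted_projection_ip h : lifted_projection M h -> cprojection cA (ip h h).
Proof. by case=> p [[_ <-] [[pp ps] _]]; rewrite pp. Qed.

Lemma ract_ip_idem h : ip h h ** ip h h = ip h h -> ract h (ip h h) = h.
Proof.
move=> pp; apply/eqP; rewrite -subr_eq0; apply/eqP; apply: (@ip_eq0 _ _ _ _ M).
by rewrite ipBl !ipBr !ip_ractl !ipM -ip_sym !pp !subrr.
Qed.

Lemma ip_mul_idem y h : ip h h ** ip h h = ip h h -> ip y h ** ip h h = ip y h.
Proof. by move=> pp; rewrite -ipM ract_ip_idem. Qed.

Lemma csq_abs_sub_ip_ract h e : ip h h ** ip h h = ip h h -> central cA e ->
  csq_abs cA e - ip (ract h e) (ract h e) = csq_abs cA (e - e ** ip h h).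
Proof. by move=> pp ce; rewrite csq_abs_sub_mulp -?ip_sym // ip_ractl ipM. Qed.

Lemma ip_subr_ract y h m :
  ip h h ** ip h h = ip h h -> (ip y h) ^* = ip y h ->
  ip (y - ract h m) (y - ract h m) - (ip y y - ip y h ** ip y h)
  = csq_abs cA (ip y h - ip h h ** m).
Proof.
move=> pp ts; have ps : (ip h h) ^* = ip h h by rewrite -ip_sym.
have tp := ip_mul_idem y pp.
rewrite csq_abs_sub_pmul // ipBl !ipBr !ip_ractl !ipM [ip h y]ip_sym ts.
apply/eqP; rewrite subr_eq; apply/eqP; rewrite [RHS]addrC.
by rewrite opprB -!addrA addKr [_ - m^* ** _]addrC.
Qed.

End HilbertModule.

Unset Implicit Arguments.

Theorem proposition4p5 (R : realType) (A : lmodType R[i]) (cA : cstar_alg A)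
    (X : lmodType R[i]) (M : hmodule cA X) (T : X -> X) (a b : A) :
  adjointable M T -> adj M T = T ->
  central cA a -> central cA b ->
  accretive M (CAB M T a b) ->
  forall h : X, lifted_projection M h ->
    cle cA (ip M (T (T h)) h - cmul cA (ip M (T h) h) (ip M (T h) h))
           ((4%:R : R[i])^-1 *: csq_abs cA (b - a)
              - ip M (ReOp M (CAB M T a b) h) h)
    /\
    cle cA ((4%:R : R[i])^-1 *: csq_abs cA (b - a)
              - ip M (ReOp M (CAB M T a b) h) h)
           ((4%:R : R[i])^-1 *: csq_abs cA (b - a)).
Proof.
move=> /adjP + Tsa; rewrite Tsa => hT ca cb acc h.
move=> /lifted_projection_ip [pp ps].
split; last by rewrite /cle subKr; exact: accretive_ip_pos.
pose e := (2%:R : R[i])^-1 *: (b - a); pose m := a + e.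
have ce : central cA e by apply/centralZ/centralB.
have cm : central cA m by apply: centralD.
have -> : (4%:R : R[i])^-1 *: csq_abs cA (b - a) = csq_abs cA e.
  by rewrite csq_absZ rmorphV ?rmorph_nat ?unitfE ?pnatr_eq0 // -invfM -natrM.
have -> : a = m - e by rewrite addrK.
have -> : b = m + e.
  by rewrite /m -addrA -scalerDl -div1r -splitr scale1r subrKC.
have ts : cstar cA (ip M (T h) h) = ip M (T h) h by rewrite -ip_sym hT.
rewrite /cle ip_ReOp_CAB // [ip M (T (T h)) h]hT opprB addrCA addrAC.
rewrite csq_abs_sub_ip_ract // ip_subr_ract // -csq_absD_orth.
  exact: csq_abs_pos.
by apply: sub_pmul_orth => //; apply: ip_mul_idem.
Qed.
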